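(* There is $p_0\in(0,2/3)$ such that for every $p\in[0,p_0)$, $$\lim_{n\to\infty}\mathbf P_p\left(\xi^1_{\lceil (C_0(p)+1)\log n\rceil}\neq\emptyset\right)=0,\qquad\text{where } C_0(p)=\frac{2}{\log(2/(1+p))}.$$
   Context: Fix an integer $r\ge3$. Let $V_n=\{1,\dots,n\}$ with $rn$ even. Let $\mathbb P$ be the law of the random multigraph $G_n$ on $V_n$ obtained by giving each vertex $r$ half-edges and pairing all $rn$ half-edges uniformly at random, and $\tilde{\mathbb P}=\mathbb P(\cdot\mid G_n\text{ is simple})$, with expectation $\tilde{\mathbb E}$. Given $G_n$ and $p\in[0,1]$, the threshold-two contact process $(\xi_t)_{t\ge0}$, $\xi_t\subseteq V_n$, is the discrete-time Markov chain in which, given $\xi_t$, independently for each vertex $x$: $x\in\xi_{t+1}$ with probability $p$ if $x$ has at least two neighbors in $\xi_t$, and $x\notin\xi_{t+1}$ otherwise. Its law given $G_n$ is $P_{G_n,p}$, and $\mathbf P_p=\tilde{\mathbb E}\,P_{G_n,p}$. $\xi^1_t$ denotes the process started from $\xi_0=V_n$. *)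

From HB Require Import structures.
From mathcomp Require Import all_boot all_order all_algebra.
From mathcomp Require Import all_classical all_reals.
From mathcomp Require Import reals_stdlib.Rstruct.
From mathcomp Require Import exp.
Set Implicit Arguments. Unset Strict Implicit. Unset Printing Implicit Defensive.
Import Order.TTheory GRing.Theory Num.Theory.
Local Open Scope ring_scope.

Notation R := Rdefinitions.R.

(* half-edges: vertex x in 'I_n carries r half-edges (x, i), i : 'I_r *)
Definition halfedge (n r : nat) := ('I_n * 'I_r)%type.

(* a pairing (perfect matching) of the half-edges, encoded as a
   fixed-point-free involution *)
Definition is_pairing (n r : nat) (f : {ffun halfedge n r -> halfedge n r}) : bool :=
  [forall h, (f (f h) == h) && (f h != h)].

Definition pairing_simple (n r : nat) (f : {ffun halfedge n r -> halfedge n r}) : bool :=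
  [forall h, (f h).1 != h.1] &&
  [forall h, forall h', ((h != h') && (h.1 == h'.1)) ==> ((f h).1 != (f h').1)].

Definition adj (n r : nat) (f : {ffun halfedge n r -> halfedge n r}) (x y : 'I_n) : bool :=
  [exists h : halfedge n r, (h.1 == x) && ((f h).1 == y)].

(* the set of pairings giving a simple graph (support of tilde P) *)
Definition simple_pairings (n r : nat) : {set {ffun halfedge n r -> halfedge n r}} :=
  [set f | is_pairing f && pairing_simple f].

Definition two_nbrs (n r : nat) (f : {ffun halfedge n r -> halfedge n r})
  (A : {set 'I_n}) (x : 'I_n) : bool :=
  (1 < #|[set y | adj f x y && (y \in A)]|)%N.

Definition trans (n r : nat) (f : {ffun halfedge n r -> halfedge n r}) (p : R)
  (A B : {set 'I_n}) : R :=
  \prod_(x : 'I_n)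
    (if two_nbrs f A x then (if x \in B then p else 1 - p)
     else (if x \in B then 0 else 1)).

(* law of xi_t started from xi_0 = V_n, under P_{G_n,p} *)
Fixpoint law (n r : nat) (f : {ffun halfedge n r -> halfedge n r}) (p : R) (t : nat)
  : {set 'I_n} -> R :=
  match t with
  | 0%N => fun B => if B == [set: 'I_n] then 1 else 0
  | t'.+1 => fun B => \sum_(A : {set 'I_n}) law f p t' A * trans f p A B
  end.

(* P_{G_n,p}(xi^1_t <> empty) *)
Definition survive (n r : nat) (f : {ffun halfedge n r -> halfedge n r}) (p : R) (t : nat) : R :=
  \sum_(B : {set 'I_n} | B != finset.set0) law f p t B.

(* annealed probability  \mathbf P_p(xi^1_t <> empty) = tilde E P_{G_n,p}(...) *)
Definition annealed_survive (n r : nat) (p : R) (t : nat) : R :=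
  (#|simple_pairings n r|%:R)^-1 * \sum_(f in simple_pairings n r) survive f p t.

Definition C0 (p : R) : R := 2 / ln (2 / (1 + p)).

Definition Tn (p : R) (n : nat) : nat := `|Num.ceil ((C0 p + 1) * ln (n%:R))|%N.

(** A first-moment bound, valid on every graph of degree at most [r]: a vertex
    is occupied at time [t+1] only if two of its at most [r] neighbours were
    occupied at time [t] and its own coin succeeds, so by a union bound over
    one of these neighbours [P(x \in xi_t) <= (r p)^t]. Hence
    [P(xi_t <> empty) <= n (r p)^t]. Taking [p0 = 1/(r e^2)], for [p < p0]
    one has [r p <= e^-2], and since [Tn p n >= log n] this is at most
    [n e^(-2 log n) = 1/n]. *)

From HB Require Import structures.
From mathcomp Require Import all_boot all_order all_algebra.
From mathcomp Require Import all_classical all_reals.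
From mathcomp Require Import reals_stdlib.Rstruct.
From mathcomp Require Import exp.
From mathcomp Require Import sequences ring lra.
Import Order.TTheory GRing.Theory Num.Theory.
Local Open Scope ring_scope.

Lemma sum_set_prod (n : nat) (c : 'I_n -> bool -> R) :
  \sum_(B : {set 'I_n}) \prod_(x : 'I_n) c x (x \in B) =
  \prod_(x : 'I_n) (c x true + c x false).
Proof.
under [RHS]eq_bigr => x _ do rewrite -big_bool.
rewrite bigA_distr_bigA /= (reindex (fun B : {set 'I_n} => [ffun x => x \in B])).
  by apply: eq_bigr => B _; apply: eq_bigr => x _; rewrite ffunE.
exists (fun g : {ffun 'I_n -> bool} => [set x | g x]) => [B _|g _].
  by apply/setP => x; rewrite inE ffunE.
by apply/ffunP => x; rewrite ffunE inE.
Qed.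

Lemma natr_card_sum (T : finType) (S : {set T}) : #|S|%:R = \sum_y (y \in S)%:R :> R.
Proof. by rewrite -sum1_card natr_sum big_mkcond; apply: eq_bigr => y _; case: (y \in S). Qed.

Section FirstMoment.
Variables (n r : nat) (f : {ffun halfedge n r -> halfedge n r}) (p : R).
Hypotheses (p_ge0 : 0 <= p) (p_le1 : p <= 1).

Lemma trans_ge0 A B : 0 <= trans f p A B.
Proof.
by apply: prodr_ge0 => x _; case: two_nbrs; case: (x \in B); rewrite ?subr_ge0.
Qed.

Lemma law_ge0 t B : 0 <= law f p t B.
Proof.
elim: t B => [|t IH] B /=; first by case: (B == _).
by apply: sumr_ge0 => A _; rewrite mulr_ge0 ?trans_ge0.
Qed.

Lemma survive_ge0 t : 0 <= survive f p t.
Proof. by apply: sumr_ge0 => B _; apply: law_ge0. Qed.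

(* The transition kernel is a product over vertices, so summing over [B]
   factorizes and every vertex other than [x] contributes a factor [1]. *)
Lemma trans_marginal A x :
  \sum_(B : {set 'I_n}) trans f p A B * (x \in B)%:R =
  if two_nbrs f A x then p else 0.
Proof.
pose c (y : 'I_n) (b : bool) : R :=
  if two_nbrs f A y then (if b then p else 1 - p) else (if b then 0 else 1).
pose cx (y : 'I_n) (b : bool) : R := if (y == x) && ~~ b then 0 else c y b.
have trans_indicator B : trans f p A B * (x \in B)%:R = \prod_y cx y (y \in B).
  rewrite /trans (bigD1 x) //= [RHS](bigD1 x) //= /cx eqxx.
  under [in RHS]eq_bigr => y /negPf -> do [].
  by case: (x \in B); rewrite ?mulr1 ?mulr0 ?mul0r.
under eq_bigr => B _ do rewrite trans_indicator.
rewrite sum_set_prod (bigD1 x) //= big1 ?mulr1.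
  by rewrite /cx /c eqxx addr0; case: two_nbrs.
by move=> y /negPf yx; rewrite /cx yx /c; case: two_nbrs => /=; lra.
Qed.

Lemma card_adj_le x : (#|[set y | adj f x y]| <= r)%N.
Proof.
apply: (@leq_trans #|[set (f (x, i)).1 | i in 'I_r]|).
  apply/subset_leq_card/fintype.subsetP => y; rewrite inE.
  by case/existsP=> -[x' i] /andP [/= /eqP -> /eqP <-]; apply/imsetP; exists i.
by rewrite (leq_trans (leq_imset_card _ _)) ?card_ord.
Qed.

Definition occupancy t x := \sum_(B : {set 'I_n}) law f p t B * (x \in B)%:R.

Lemma occupancy_step t x :
  occupancy t.+1 x <= p * \sum_y (adj f x y)%:R * occupancy t y.
Proof.
have -> : occupancy t.+1 x
    = \sum_A law f p t A * (if two_nbrs f A x then p else 0).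
  rewrite /occupancy /=; under eq_bigr => B _ do rewrite mulr_suml.
  rewrite exchange_big /=; apply: eq_bigr => A _.
  by rewrite -trans_marginal mulr_sumr; apply: eq_bigr => B _; rewrite mulrA.
have -> : p * \sum_y (adj f x y)%:R * occupancy t y
    = \sum_A law f p t A * (p * \sum_y (adj f x y)%:R * (y \in A)%:R).
  under [RHS]eq_bigr => A _ do rewrite !mulr_sumr.
  rewrite exchange_big mulr_sumr /=; apply: eq_bigr => y _.
  rewrite /occupancy !mulr_sumr; apply: eq_bigr => A _.
  by ring.
apply: ler_sum => A _; apply: ler_wpM2l; first exact: law_ge0.
have nbrs_ge0 : 0 <= \sum_y (adj f x y)%:R * (y \in A)%:R :> R.
  by apply: sumr_ge0 => y _; apply: mulr_ge0.
case: ifP => [two|_]; last exact: mulr_ge0.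
have -> : \sum_y (adj f x y)%:R * (y \in A)%:R
    = #|[set y | adj f x y && (y \in A)]|%:R :> R.
  rewrite natr_card_sum; apply: eq_bigr => y _; rewrite inE.
  by case: adj; case: (y \in A); rewrite ?mulr1 ?mulr0.
by rewrite ler_peMr // ler1n ltnW.
Qed.

Lemma occupancy_le t x : occupancy t x <= (r%:R * p) ^+ t.
Proof.
elim: t x => [|t IH] x.
  rewrite /occupancy /= (bigD1 [set: 'I_n]) //= big1 ?eqxx ?inE ?mulr1 ?addr0 //.
  by move=> B /negPf ->; rewrite mul0r.
apply: (le_trans (occupancy_step t x)).
rewrite exprS -mulrA mulrCA; apply: ler_wpM2l => //.
apply: le_trans (_ : \sum_y (adj f x y)%:R * (r%:R * p) ^+ t <= _).
  by apply: ler_sum => y _; apply: ler_wpM2l.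
rewrite -mulr_suml ler_wpM2r ?exprn_ge0 ?mulr_ge0 //.
have -> : \sum_y (adj f x y)%:R = #|[set y | adj f x y]|%:R :> R.
  by rewrite natr_card_sum; apply: eq_bigr => y _; rewrite inE.
by rewrite ler_nat card_adj_le.
Qed.

Lemma survive_le_sum_occupancy t : survive f p t <= \sum_x occupancy t x.
Proof.
rewrite /occupancy exchange_big /= /survive big_mkcond /=.
apply: ler_sum => B _; rewrite -mulr_sumr -natr_card_sum.
case: ifP => [B0|_]; last by rewrite mulr_ge0 ?law_ge0.
by rewrite ler_peMr ?law_ge0 // ler1n card_gt0.
Qed.

Lemma survive_le t : survive f p t <= n%:R * (r%:R * p) ^+ t.
Proof.
apply: (le_trans (survive_le_sum_occupancy t)).
rewrite mulr_natl -[n in _ *+ n]card_ord -sumr_const.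
by apply: ler_sum => x _; apply: occupancy_le.
Qed.

End FirstMoment.

Lemma annealed_survive_ge0 n r (p : R) t : 0 <= p -> p <= 1 ->
  0 <= annealed_survive n r p t.
Proof.
move=> p_ge0 p_le1; rewrite mulr_ge0 ?invr_ge0 //.
by apply: sumr_ge0 => g _; apply: survive_ge0.
Qed.

Lemma annealed_survive_le n r (p : R) t : 0 <= p -> p <= 1 ->
  annealed_survive n r p t <= n%:R * (r%:R * p) ^+ t.
Proof.
move=> p_ge0 p_le1; rewrite /annealed_survive.
set N := #|simple_pairings n r|; set b := n%:R * _.
have b_ge0 : 0 <= b by rewrite mulr_ge0 ?exprn_ge0 ?mulr_ge0.
have [->|N_gt0] := posnP N; first by rewrite invr0 mul0r.
apply: le_trans (_ : N%:R^-1 * (b *+ N) <= _).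
  by rewrite ler_wpM2l ?invr_ge0 // -sumr_const; apply: ler_sum => g _; apply: survive_le.
by rewrite -(mulr_natr b) mulrCA mulVf ?mulr1 // pnatr_eq0 -lt0n.
Qed.

Lemma ln_le_Tn (p : R) n : 0 <= p -> p <= 1 -> ln (n%:R : R) <= (Tn p n)%:R.
Proof.
move=> p_ge0 p_le1; have [->|n_gt0] := posnP n; first by rewrite ln0.
have lnn_ge0 : 0 <= ln (n%:R : R) by rewrite ln_ge0 // ler1n.
have C0_ge0 : 0 <= C0 p.
  by rewrite divr_ge0 // ln_ge0 // ler_pdivlMr ?mul1r; lra.
apply: le_trans (_ : (C0 p + 1) * ln n%:R <= _).
  by rewrite -[X in X <= _]mul1r ler_wpM2r //; lra.
by rewrite (le_trans (ceil_ge _)) // /Tn natr_absz ler_int ler_norm.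
Qed.

(* [e^2 q <= 1] and [t >= log m] give [q^t <= e^(-2t) <= m^-2]. *)
Lemma mul_expn_le_inv (q : R) (m : R) t : 0 <= q -> expR 1 ^+ 2 * q <= 1 ->
  1 <= m -> ln m <= t%:R -> m * q ^+ t <= m^-1.
Proof.
move=> q_ge0 eq_le1 m_ge1 ln_le; have m_gt0 : 0 < m by lra.
have m_le : m <= expR 1 ^+ t by rewrite -[m]lnK ?posrE // -expRM_natr mul1r ler_expR.
have -> : m * q ^+ t = m^-1 * (m ^+ 2 * q ^+ t).
  by rewrite expr2 !mulrA mulVf ?mul1r ?lt0r_neq0.
rewrite -[X in _ <= X]mulr1 ler_wpM2l ?invr_ge0 ?(ltW m_gt0) //.
apply: (@le_trans _ _ ((expR 1 ^+ 2 * q) ^+ t)); last by rewrite exprn_ile1 ?mulr_ge0 ?exprn_ge0 ?expR_ge0.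
rewrite exprMn -exprM mulnC exprM ler_wpM2r ?exprn_ge0 // !expr2.
by rewrite ler_pM ?(ltW m_gt0).
Qed.

Theorem corollary1 (r : nat) (hr : (3 <= r)%N) :
  exists p0 : R, 0 < p0 /\ p0 < 2 / 3 /\
    forall p : R, 0 <= p -> p < p0 ->
      forall eps : R, 0 < eps ->
        exists N : nat, forall n : nat, (N <= n)%N -> ~~ odd (r * n) ->
          `|annealed_survive n r p (Tn p n)| < eps.
Proof.
set X : R := r%:R * expR 1 ^+ 2.
have X_ge3 : 3 <= X.
  by rewrite -[3 : R]mulr1 ler_pM ?ler_nat ?expr_ge1 ?(ltW (pexpR_gt1 ltr01)) ?exprn_ge0 ?expR_ge0.
have X_gt0 : 0 < X by lra.
exists X^-1; split; first by rewrite invr_gt0.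
split; first by rewrite invf_plt ?posrE ?divr_gt0 // invf_div; lra.
move=> p p_ge0 p_lt eps eps_gt0.
have pX_le1 : p * X <= 1 by rewrite -ler_pdivlMr // div1r ltW.
have p_le1 : p <= 1 by nra.
have rp_ge0 : 0 <= r%:R * p by rewrite mulr_ge0.
have e2rp_le1 : expR 1 ^+ 2 * (r%:R * p) <= 1.
  by rewrite [X in X <= _](_ : _ = p * X) // /X; ring.
have eps_inv_lt : eps^-1 < (Num.bound eps^-1)%:R.
  by apply: archi_boundP; rewrite invr_ge0 ltW.
exists (Num.bound eps^-1).+1 => n n_gt _.
have n_ge1 : 1 <= n%:R :> R by rewrite ler1n (leq_trans _ n_gt).
rewrite ger0_norm ?annealed_survive_ge0 //.
apply: le_lt_trans (annealed_survive_le _ _ _ _ p_ge0 p_le1) _.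
apply: le_lt_trans (mul_expn_le_inv _ _ _ rp_ge0 e2rp_le1 n_ge1 (ln_le_Tn _ _ p_ge0 p_le1)) _.
rewrite -[eps]invrK ltf_pV2 ?posrE ?invr_gt0 ?(lt_le_trans ltr01 n_ge1) //.
by apply: lt_trans eps_inv_lt _; rewrite ltr_nat.
Qed.
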